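(* Let $(\mathfrak g,\mathfrak g^* )$ be a Hom-Lie bialgebra (with $\mathfrak g$ finite-dimensional, Hom-Lie algebras $(\mathfrak{g},[\cdot,\cdot]_{\mathfrak{g}},\phi_{\mathfrak{g}})$ and $(\mathfrak g^*,[\cdot,\cdot]_{\mathfrak g^*},\phi_{\mathfrak g}^* )$ and cobracket $\Delta$). Then the canonical structure on $\mathfrak g\oplus\mathfrak g^*$ described below is a Hom-Lie bialgebra, and the maps $\mathfrak g\to\mathfrak g\oplus\mathfrak g^*$, $x\mapsto\phi_{\mathfrak g}(x)$, and $\mathfrak g^*\to\mathfrak g\oplus\mathfrak g^*$, $a\mapsto\phi_{\mathfrak g}^*(a)$, are homomorphisms of Hom-Lie bialgebras from $(\mathfrak g,\Delta)$ and from $(\mathfrak g^*,-\Delta_{\mathfrak g^*})$ respectively, where $\langle\Delta_{\mathfrak g^*}(a),x\otimes y\rangle=\langle a,[x,y]_{\mathfrak g}\rangle$.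
   Context: A Hom-Lie algebra $(\mathfrak{h},[\cdot,\cdot]_{\mathfrak{h}},\phi_{\mathfrak{h}})$: skew-symmetric bilinear bracket and linear map $\phi_{\mathfrak h}$ with $\phi_{\mathfrak h}[x,y]=[\phi_{\mathfrak h}x,\phi_{\mathfrak h}y]$ and $[\phi_{\mathfrak h}(x),[y,z]]+[\phi_{\mathfrak h}(y),[z,x]]+[\phi_{\mathfrak h}(z),[x,y]]=0$; weakly involutive if $[\phi_{\mathfrak h}^2(x),y]=[x,y]$. For $z\in\mathfrak h$, $t\in\mathfrak h\otimes\mathfrak h$: $\mathrm{ad}_zt=(\mathrm{ad}_z\otimes\phi_{\mathfrak h}+\phi_{\mathfrak h}\otimes\mathrm{ad}_z)t$, $\mathrm{ad}_zy=[z,y]$. A Hom-Lie bialgebra $(\mathfrak h,\Delta_{\mathfrak h})$ (finite-dimensional) is a weakly involutive Hom-Lie algebra $\mathfrak h$ with a linear map $\Delta_{\mathfrak h}:\mathfrak h\to\mathfrak h\otimes\mathfrak h$ such that $\mathfrak h^*$ with bracket $\langle[a,b]_{\mathfrak h^*},x\rangle=\langle\Delta_{\mathfrak h}(x),a\otimes b\rangle$ and map $\phi_{\mathfrak h}^*$ is a weakly involutive Hom-Lie algebra and $\Delta_{\mathfrak h}[x,y]=\mathrm{ad}_{\phi_{\mathfrak h}(x)}\Delta_{\mathfrak h}(y)-\mathrm{ad}_{\phi_{\mathfrak h}(y)}\Delta_{\mathfrak h}(x)$; we also write $(\mathfrak h,\mathfrak h^* )$. A homomorphism of Hom-Lie bialgebras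 $f:(\mathfrak h,\Delta_{\mathfrak h})\to(\mathfrak k,\Delta_{\mathfrak k})$ is a linear map with $f[x,y]=[f(x),f(y)]$, $f\phi_{\mathfrak h}=\phi_{\mathfrak k}f$ and $(f\otimes f)\Delta_{\mathfrak h}=\Delta_{\mathfrak k}f$. Canonical structure: let $\mathrm{ad}^\circ_xa\in\mathfrak g^*$ be defined by $\langle\mathrm{ad}^\circ_xa,y\rangle=-\langle a,[\phi_{\mathfrak g}(x),y]_{\mathfrak g}\rangle$ and $\mathfrak{ad}^\circ_ax\in\mathfrak g$ by $\langle\mathfrak{ad}^\circ_ax,b\rangle=-\langle x,[\phi_{\mathfrak g}^*(a),b]_{\mathfrak g^*}\rangle$. On $\mathfrak g\oplus\mathfrak g^*$ take the bracket $[x+a,y+b]_d=[x,y]_{\mathfrak g}+\mathrm{ad}^\circ_xb-\mathrm{ad}^\circ_ya+[a,b]_{\mathfrak g^*}+\mathfrak{ad}^\circ_ay-\mathfrak{ad}^\circ_bx$ and twisting map $\phi_{\mathfrak g}\oplus\phi_{\mathfrak g}^*$; with $\{e_i\}$ a basis of $\mathfrak g$, $\{f_i\}$ the dual basis and $r=\sum_ie_i\otimes f_i$, the cobracket is $\Delta_{\mathcal{HD}}(u)=(\mathrm{ad}_u\otimes(\phi_{\mathfrak g}\oplus\phi_{\mathfrak g}^* )+(\phi_{\mathfrak g}\oplus\phi_{\mathfrak g}^* )\otimes\mathrm{ad}_u)r$ for $u\in\mathfrak g\oplus\mathfrak g^*$ (ad taken in the bracket $[\cdot,\cdot]_d$).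 *)

(* Finite-dimensional spaces over a field K are modelled as
   row vectors 'rV[K]_n with standard basis e_i = delta_mx 0 i; the dual space
   g^* is 'rV[K]_n with the dual basis (pairing <a,x> = sum_i a_i x_i);
   the tensor square V (x) V is 'M[K]_(n,n), with u (x) v = u^T *m v. *)
From HB Require Import structures.
From mathcomp Require Import all_boot all_order all_algebra.
Set Implicit Arguments. Unset Strict Implicit. Unset Printing Implicit Defensive.
Import Order.TTheory GRing.Theory Num.Theory.
Local Open Scope ring_scope.

Section Defs.
Variable K : fieldType.

Definition bvec (n : nat) (i : 'I_n) : 'rV[K]_n := delta_mx 0 i.

Definition pair (n : nat) (a x : 'rV[K]_n) : K := \sum_i a 0 i * x 0 i.

Definition tpair (n : nat) (t s : 'M[K]_(n, n)) : K :=
  \sum_i \sum_j t i j * s i j.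

Definition tens (n : nat) (u v : 'rV[K]_n) : 'M[K]_(n, n) := u^T *m v.

Definition tmap (n m : nat) (f g : 'rV[K]_n -> 'rV[K]_m) (t : 'M[K]_(n, n))
  : 'M[K]_(m, m) :=
  \sum_i \sum_j t i j *: tens (f (bvec i)) (g (bvec j)).

Definition islinear (n m : nat) (f : 'rV[K]_n -> 'rV[K]_m) : Prop :=
  forall (c : K) x y, f (c *: x + y) = c *: f x + f y.

Definition islinearT (n m : nat) (f : 'rV[K]_n -> 'M[K]_(m, m)) : Prop :=
  forall (c : K) x y, f (c *: x + y) = c *: f x + f y.

Definition HomLie (n : nat) (br : 'rV[K]_n -> 'rV[K]_n -> 'rV[K]_n)
  (phi : 'rV[K]_n -> 'rV[K]_n) : Prop :=
  [/\ (forall z, islinear (br z)),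
      (forall x y, br x y = - br y x),
      islinear phi,
      (forall x y, phi (br x y) = br (phi x) (phi y)) &
      (forall x y z, br (phi x) (br y z) + br (phi y) (br z x)
                     + br (phi z) (br x y) = 0)].

Definition weakly_involutive (n : nat) (br : 'rV[K]_n -> 'rV[K]_n -> 'rV[K]_n)
  (phi : 'rV[K]_n -> 'rV[K]_n) : Prop :=
  forall x y, br (phi (phi x)) y = br x y.

Definition adT (n : nat) (br : 'rV[K]_n -> 'rV[K]_n -> 'rV[K]_n)
  (phi : 'rV[K]_n -> 'rV[K]_n) (z : 'rV[K]_n) (t : 'M[K]_(n, n)) : 'M[K]_(n, n) :=
  tmap (br z) phi t + tmap phi (br z) t.

(* bracket on h^* induced by Delta: <[a,b], x> = <Delta x, a (x) b> *)
Definition dual_br (n : nat) (Delta : 'rV[K]_n -> 'M[K]_(n, n))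
  (a b : 'rV[K]_n) : 'rV[K]_n :=
  \row_k tpair (Delta (bvec k)) (tens a b).

Definition dualmap (n : nat) (phi : 'rV[K]_n -> 'rV[K]_n) (a : 'rV[K]_n)
  : 'rV[K]_n := \row_k pair a (phi (bvec k)).

Definition dual_cobr (n : nat) (br : 'rV[K]_n -> 'rV[K]_n -> 'rV[K]_n)
  (a : 'rV[K]_n) : 'M[K]_(n, n) :=
  \matrix_(i, j) pair a (br (bvec i) (bvec j)).

Definition HomLieBialg (n : nat) (br : 'rV[K]_n -> 'rV[K]_n -> 'rV[K]_n)
  (phi : 'rV[K]_n -> 'rV[K]_n) (Delta : 'rV[K]_n -> 'M[K]_(n, n)) : Prop :=
  [/\ HomLie br phi /\ weakly_involutive br phi,
      islinearT Delta,
      HomLie (dual_br Delta) (dualmap phi),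
      weakly_involutive (dual_br Delta) (dualmap phi) &
      (forall x y, Delta (br x y) =
        adT br phi (phi x) (Delta y) - adT br phi (phi y) (Delta x))].

Definition HomLieBialgHom (n m : nat)
  (br : 'rV[K]_n -> 'rV[K]_n -> 'rV[K]_n) (phi : 'rV[K]_n -> 'rV[K]_n)
  (Delta : 'rV[K]_n -> 'M[K]_(n, n))
  (br' : 'rV[K]_m -> 'rV[K]_m -> 'rV[K]_m) (phi' : 'rV[K]_m -> 'rV[K]_m)
  (Delta' : 'rV[K]_m -> 'M[K]_(m, m)) (f : 'rV[K]_n -> 'rV[K]_m) : Prop :=
  [/\ islinear f,
      (forall x y, f (br x y) = br' (f x) (f y)),
      (forall x, f (phi x) = phi' (f x)) &
      (forall x, tmap f f (Delta x) = Delta' (f x))].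

Section Double.
Variables (n : nat) (br : 'rV[K]_n -> 'rV[K]_n -> 'rV[K]_n)
  (phi : 'rV[K]_n -> 'rV[K]_n) (Delta : 'rV[K]_n -> 'M[K]_(n, n)).

(* <ad°_x a, y> = - <a, [phi x, y]> *)
Definition coad_g (x a : 'rV[K]_n) : 'rV[K]_n :=
  \row_k - pair a (br (phi x) (bvec k)).

(* <ad°_a x, b> = - <x, [phi^* a, b]_*> *)
Definition coad_gs (a x : 'rV[K]_n) : 'rV[K]_n :=
  \row_k - pair x (dual_br Delta (dualmap phi a) (bvec k)).

Definition double_br (u v : 'rV[K]_(n + n)) : 'rV[K]_(n + n) :=
  let x := lsubmx u in let a := rsubmx u in
  let y := lsubmx v in let b := rsubmx v in
  row_mx (br x y + coad_gs a y - coad_gs b x)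
         (coad_g x b - coad_g y a + dual_br Delta a b).

Definition double_phi (u : 'rV[K]_(n + n)) : 'rV[K]_(n + n) :=
  row_mx (phi (lsubmx u)) (dualmap phi (rsubmx u)).

Definition double_r : 'M[K]_(n + n, n + n) :=
  \sum_(i < n) tens (row_mx (bvec i) 0) (row_mx 0 (bvec i)).

Definition double_cobr (u : 'rV[K]_(n + n)) : 'M[K]_(n + n, n + n) :=
  adT double_br double_phi u double_r.

Definition incl_g (x : 'rV[K]_n) : 'rV[K]_(n + n) := row_mx (phi x) 0.
Definition incl_gs (a : 'rV[K]_n) : 'rV[K]_(n + n) := row_mx 0 (dualmap phi a).

End Double.
End Defs.

From HB Require Import structures.
From mathcomp Require Import all_boot all_order all_algebra.
From mathcomp Require Import ring.
Set Implicit Arguments. Unset Strict Implicit. Unset Printing Implicit Defensive.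
Import GRing.Theory.
Local Open Scope ring_scope.

(* Every identity is tested against the duality pairing: a vector is determined
   by its pairings with all vectors, a tensor by its pairings with all
   elementary tensors a (x) b.  Paired in this way, the cobracket of the double
   reads <Delta_D (z + c), (a + x) (x) (b + y)> = <[a, b]_*, z> - <c, [x, y]>,
   so the dual of the double is g^* (+) g with the brackets [., .]_* and
   -[., .], and its Hom-Lie axioms are those of g^* and g.  The Jacobiator of
   the double is trilinear and its cocycle defect is bilinear and
   antisymmetric, so both need only be checked on vectors of g and of g^*;
   there each reduces to a Jacobi identity of g or g^*, or to the compatibility
   condition of (g, Delta) paired with suitable vectors.  The same pairing of
   the compatibility condition shows that (g^*, -Delta_* ) is a Hom-Lie
   bialgebra, and the inclusions preserve cobrackets because
   <Delta_D (phi x), a (x) b> = <[a, b]_*, phi x>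
                              = <Delta x, phi^* a (x) phi^* b>. *)

Section LinearMaps.
Variables (K : fieldType) (V W : lmodType K) (f : V -> W).
Hypothesis f_lin : forall (c : K) x y, f (c *: x + y) = c *: f x + f y.

Lemma lin0 : f 0 = 0.
Proof. by have := f_lin (-1) 0 0; rewrite scaler0 addr0 scaleN1r addNr. Qed.
Lemma linD x y : f (x + y) = f x + f y.
Proof. by have := f_lin 1 x y; rewrite !scale1r. Qed.
Lemma linZ c x : f (c *: x) = c *: f x.
Proof. by have := f_lin c x 0; rewrite !addr0 lin0 addr0. Qed.
Lemma linN x : f (- x) = - f x.
Proof. by rewrite -scaleN1r linZ scaleN1r. Qed.
Lemma linB x y : f (x - y) = f x - f y.
Proof. by rewrite linD linN. Qed.

End LinearMaps.

Lemma eq0_by_opp (R : zmodType) (a b : R) : b = 0 -> a = - b -> a = 0.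
Proof. by move=> -> ->; rewrite oppr0. Qed.
Lemma eq0_by_add (R : zmodType) (a b c : R) : b = 0 -> c = 0 -> a = b + c -> a = 0.
Proof. by move=> -> -> ->; rewrite addr0. Qed.

Section Pairing.
Variables (K : fieldType) (n : nat).
Implicit Types (a b x y : 'rV[K]_n) (t s : 'M[K]_(n, n)).

Definition linear_form (F : 'rV[K]_n -> K) :=
  forall c x y, F (c *: x + y) = c * F x + F y.

Lemma bvecE (i k : 'I_n) : bvec K i 0 k = (i == k)%:R.
Proof. by rewrite /bvec mxE eqxx /= eq_sym. Qed.

Lemma sum_mul_delta (F : 'I_n -> K) i : \sum_k F k * (i == k)%:R = F i.
Proof.
rewrite (bigD1 i) //= eqxx mulr1 big1 ?addr0 //.
by move=> k /negPf; rewrite eq_sym => ->; rewrite mulr0.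
Qed.

Lemma pairC a x : pair a x = pair x a.
Proof. by apply: eq_bigr => i _; rewrite mulrC. Qed.
Lemma pair_bvecr a k : pair a (bvec K k) = a 0 k.
Proof. by rewrite /pair; under eq_bigr do rewrite bvecE; rewrite sum_mul_delta. Qed.
Lemma pair_bvecl a k : pair (bvec K k) a = a 0 k.
Proof. by rewrite pairC pair_bvecr. Qed.

Lemma pairDZl c a b x : pair (c *: a + b) x = c * pair a x + pair b x.
Proof.
rewrite /pair mulr_sumr -big_split; apply: eq_bigr => i _ /=; rewrite !mxE; ring.
Qed.
Lemma pairDZr c a x y : pair a (c *: x + y) = c * pair a x + pair a y.
Proof. by rewrite pairC pairDZl !(pairC a). Qed.
Lemma pair0l x : pair 0 x = 0.
Proof. by rewrite /pair big1 // => i _; rewrite mxE mul0r. Qed.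
Lemma pair0r x : pair x 0 = 0.
Proof. by rewrite pairC pair0l. Qed.
Lemma pairDl a b x : pair (a + b) x = pair a x + pair b x.
Proof. by have := pairDZl 1 a b x; rewrite scale1r mul1r. Qed.
Lemma pairDr a x y : pair a (x + y) = pair a x + pair a y.
Proof. by rewrite pairC pairDl !(pairC a). Qed.
Lemma pairZl c a x : pair (c *: a) x = c * pair a x.
Proof. by have := pairDZl c a 0 x; rewrite addr0 pair0l addr0. Qed.
Lemma pairNl a x : pair (- a) x = - pair a x.
Proof. by rewrite -scaleN1r pairZl mulN1r. Qed.
Lemma pairNr a x : pair a (- x) = - pair a x.
Proof. by rewrite pairC pairNl pairC. Qed.
Lemma pairBl a b x : pair (a - b) x = pair a x - pair b x.
Proof. by rewrite pairDl pairNl. Qed.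
Lemma pairBr a x y : pair a (x - y) = pair a x - pair a y.
Proof. by rewrite pairDr pairNr. Qed.

Lemma linear_form_expand F : linear_form F ->
  forall y, F y = \sum_k y 0 k * F (bvec K k).
Proof.
move=> F_lin y.
have F0 : F 0 = 0 by have := F_lin (-1) 0 0; rewrite scaler0 addr0 mulN1r addNr.
rewrite [in LHS](row_sum_delta y).
by elim/big_rec2: _ => [|i u v _ <-]; [exact: F0 | rewrite F_lin].
Qed.

Lemma pair_row_form F : linear_form F ->
  forall y, pair (\row_k F (bvec K k)) y = F y.
Proof.
move=> F_lin y; rewrite (linear_form_expand F_lin y) /pair.
by apply: eq_bigr => k _; rewrite mxE mulrC.
Qed.
Lemma pair_row_formr F : linear_form F ->
  forall y, pair y (\row_k F (bvec K k)) = F y.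
Proof. by move=> F_lin y; rewrite pairC pair_row_form. Qed.

Lemma eq_row_pair a b : (forall y, pair a y = pair b y) -> a = b.
Proof. by move=> eq_ab; apply/rowP => k; rewrite -!pair_bvecr. Qed.
Lemma eq_row_pairr a b : (forall y, pair y a = pair y b) -> a = b.
Proof. by move=> eq_ab; apply: eq_row_pair => y; rewrite !(pairC _ y). Qed.

Lemma tensE a b i j : tens a b i j = a 0 i * b 0 j.
Proof. by rewrite /tens !mxE big_ord1 !mxE. Qed.

Lemma tpair_tens t a b :
  tpair t (tens a b) = \sum_i \sum_j t i j * (a 0 i * b 0 j).
Proof. by apply: eq_bigr => i _; apply: eq_bigr => j _; rewrite tensE. Qed.

Lemma tpairDZl c t s (u : 'M[K]_(n, n)) :
  tpair (c *: t + s) u = c * tpair t u + tpair s u.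
Proof.
rewrite /tpair mulr_sumr -big_split; apply: eq_bigr => i _ /=.
rewrite mulr_sumr -big_split; apply: eq_bigr => j _ /=; rewrite !mxE; ring.
Qed.
Lemma tpair0l (u : 'M[K]_(n, n)) : tpair 0 u = 0.
Proof. by rewrite /tpair big1 // => i _; rewrite big1 // => j _; rewrite mxE mul0r. Qed.
Lemma tpairDl t s (u : 'M[K]_(n, n)) : tpair (t + s) u = tpair t u + tpair s u.
Proof. by have := tpairDZl 1 t s u; rewrite scale1r mul1r. Qed.
Lemma tpairZl c t (u : 'M[K]_(n, n)) : tpair (c *: t) u = c * tpair t u.
Proof. by have := tpairDZl c t 0 u; rewrite addr0 tpair0l addr0. Qed.
Lemma tpairNl t (u : 'M[K]_(n, n)) : tpair (- t) u = - tpair t u.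
Proof. by rewrite -scaleN1r tpairZl mulN1r. Qed.
Lemma tpairBl t s (u : 'M[K]_(n, n)) : tpair (t - s) u = tpair t u - tpair s u.
Proof. by rewrite tpairDl tpairNl. Qed.
Lemma tpair_suml (I : Type) (r : seq I) (P : pred I) (M : I -> 'M[K]_(n, n))
    (u : 'M[K]_(n, n)) :
  tpair (\sum_(i <- r | P i) M i) u = \sum_(i <- r | P i) tpair (M i) u.
Proof. by elim/big_rec2: _ => [|i A B _ <-]; [exact: tpair0l | rewrite tpairDl]. Qed.

Lemma tpair_tensDZl t c a a' b :
  tpair t (tens (c *: a + a') b) = c * tpair t (tens a b) + tpair t (tens a' b).
Proof.
rewrite !tpair_tens mulr_sumr -big_split; apply: eq_bigr => i _ /=.
rewrite mulr_sumr -big_split; apply: eq_bigr => j _ /=; rewrite !mxE; ring.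
Qed.
Lemma tpair_tensDZr t c a b b' :
  tpair t (tens a (c *: b + b')) = c * tpair t (tens a b) + tpair t (tens a b').
Proof.
rewrite !tpair_tens mulr_sumr -big_split; apply: eq_bigr => i _ /=.
rewrite mulr_sumr -big_split; apply: eq_bigr => j _ /=; rewrite !mxE; ring.
Qed.
Lemma tpair_tensDl t a a' b :
  tpair t (tens (a + a') b) = tpair t (tens a b) + tpair t (tens a' b).
Proof. by have := tpair_tensDZl t 1 a a' b; rewrite scale1r mul1r. Qed.
Lemma tpair_tensDr t a b b' :
  tpair t (tens a (b + b')) = tpair t (tens a b) + tpair t (tens a b').
Proof. by have := tpair_tensDZr t 1 a b b'; rewrite scale1r mul1r. Qed.

Lemma tpair_tens_tens (u v : 'rV[K]_n) a b :
  tpair (tens u v) (tens a b) = pair u a * pair v b.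
Proof.
rewrite tpair_tens /pair mulr_suml; apply: eq_bigr => i _ /=.
rewrite mulr_sumr; apply: eq_bigr => j _; rewrite tensE; ring.
Qed.

Lemma tpair_bvec t i j : tpair t (tens (bvec K i) (bvec K j)) = t i j.
Proof.
rewrite tpair_tens.
transitivity (\sum_k (\sum_l t k l * (j == l)%:R) * (i == k)%:R).
  apply: eq_bigr => k _; rewrite mulr_suml; apply: eq_bigr => l _.
  by rewrite !bvecE; ring.
by rewrite sum_mul_delta sum_mul_delta.
Qed.

Lemma eq_tens_pair t s :
  (forall a b, tpair t (tens a b) = tpair s (tens a b)) -> t = s.
Proof. by move=> eq_ts; apply/matrixP => i j; rewrite -!tpair_bvec. Qed.

Lemma dualmap_pair (f : 'rV[K]_n -> 'rV[K]_n) a x :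
  islinear f -> pair (dualmap f a) x = pair a (f x).
Proof.
move=> f_lin; apply: (pair_row_form (F := fun x => pair a (f x))).
by move=> c u v; rewrite f_lin pairDZr.
Qed.

Lemma dualmap_lin (f : 'rV[K]_n -> 'rV[K]_n) : islinear (dualmap f).
Proof. by move=> c a b; apply/rowP => k; rewrite !mxE pairDZl. Qed.

Lemma dualmapK (f : 'rV[K]_n -> 'rV[K]_n) x :
  islinear f -> dualmap (dualmap f) x = f x.
Proof.
by move=> f_lin; apply/rowP => k; rewrite mxE pairC dualmap_pair // pair_bvecl.
Qed.

Lemma dual_br_pair (D : 'rV[K]_n -> 'M[K]_(n, n)) a b x :
  islinearT D -> pair (dual_br D a b) x = tpair (D x) (tens a b).
Proof.
move=> D_lin; apply: (pair_row_form (F := fun x => tpair (D x) (tens a b))).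
by move=> c u v; rewrite D_lin tpairDZl.
Qed.

Lemma dual_brDZl (D : 'rV[K]_n -> 'M[K]_(n, n)) c a a' b :
  dual_br D (c *: a + a') b = c *: dual_br D a b + dual_br D a' b.
Proof. by apply/rowP => k; rewrite !mxE tpair_tensDZl. Qed.
Lemma dual_brDZr (D : 'rV[K]_n -> 'M[K]_(n, n)) c a b b' :
  dual_br D a (c *: b + b') = c *: dual_br D a b + dual_br D a b'.
Proof. by apply/rowP => k; rewrite !mxE tpair_tensDZr. Qed.

End Pairing.

Definition adjoint (K : fieldType) (n m : nat) (f : 'rV[K]_n -> 'rV[K]_m)
  (A : 'rV[K]_m) : 'rV[K]_n := \row_k pair A (f (bvec K k)).

Lemma tmap_pair (K : fieldType) (n m : nat) (f g : 'rV[K]_n -> 'rV[K]_m)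
  (t : 'M[K]_(n, n)) (A B : 'rV[K]_m) :
  tpair (tmap f g t) (tens A B) = tpair t (tens (adjoint f A) (adjoint g B)).
Proof.
rewrite /tmap tpair_suml tpair_tens; apply: eq_bigr => i _.
rewrite tpair_suml; apply: eq_bigr => j _.
by rewrite tpairZl tpair_tens_tens !mxE !(pairC A) !(pairC B).
Qed.

Lemma adT_pair (K : fieldType) (m : nat) (B : 'rV[K]_m -> 'rV[K]_m -> 'rV[K]_m)
  (F : 'rV[K]_m -> 'rV[K]_m) z t a b :
  tpair (adT B F z t) (tens a b) =
    tpair t (tens (dualmap (B z) a) (dualmap F b))
  + tpair t (tens (dualmap F a) (dualmap (B z) b)).
Proof. by rewrite /adT tpairDl !tmap_pair. Qed.

Section SkewBracket.
Variables (K : fieldType) (m : nat) (B : 'rV[K]_m -> 'rV[K]_m -> 'rV[K]_m)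
  (F : 'rV[K]_m -> 'rV[K]_m) (D : 'rV[K]_m -> 'M[K]_(m, m)).
Hypotheses (B_linr : forall z, islinear (B z))
  (B_skew : forall x y, B x y = - B y x) (F_lin : islinear F).

Lemma B_Dr (x y z : 'rV[K]_m) : B z (x + y) = B z x + B z y.
Proof. exact: (linD (B_linr z)). Qed.
Lemma B_Dl (x y z : 'rV[K]_m) : B (x + y) z = B x z + B y z.
Proof. by rewrite B_skew B_Dr opprD -!B_skew. Qed.

Definition jacobiator u v w :=
  B (F u) (B v w) + B (F v) (B w u) + B (F w) (B u v).

Lemma jacobiator_rot u v w : jacobiator u v w = jacobiator v w u.
Proof. by rewrite /jacobiator -addrA addrC. Qed.
Lemma jacobiatorDl u1 u2 v w :
  jacobiator (u1 + u2) v w = jacobiator u1 v w + jacobiator u2 v w.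
Proof.
rewrite /jacobiator (linD F_lin) !B_Dl !B_Dr ?B_Dl.
by apply/rowP => k; rewrite !mxE; ring.
Qed.
Lemma jacobiatorDm u v1 v2 w :
  jacobiator u (v1 + v2) w = jacobiator u v1 w + jacobiator u v2 w.
Proof.
by rewrite (jacobiator_rot u) jacobiatorDl -!(jacobiator_rot u).
Qed.
Lemma jacobiatorDr u v w1 w2 :
  jacobiator u v (w1 + w2) = jacobiator u v w1 + jacobiator u v w2.
Proof.
rewrite (jacobiator_rot u v) (jacobiator_rot v) jacobiatorDl.
by rewrite (jacobiator_rot w1) (jacobiator_rot w2).
Qed.

Hypothesis D_lin : islinearT D.

Definition cocycle_defect u v :=
  D (B u v) - (adT B F (F u) (D v) - adT B F (F v) (D u)).

Lemma adTDr z (t1 t2 : 'M[K]_(m, m)) :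
  adT B F z (t1 + t2) = adT B F z t1 + adT B F z t2.
Proof. by apply: eq_tens_pair => a b; rewrite tpairDl !adT_pair !tpairDl; ring. Qed.
Lemma adTDl (z1 z2 : 'rV[K]_m) t :
  adT B F (z1 + z2) t = adT B F z1 t + adT B F z2 t.
Proof.
have dualmap_BDl a : dualmap (B (z1 + z2)) a = dualmap (B z1) a + dualmap (B z2) a.
  by apply/rowP => k; rewrite !mxE B_Dl pairDr.
apply: eq_tens_pair => a b; rewrite tpairDl !adT_pair !dualmap_BDl.
by rewrite tpair_tensDl tpair_tensDr; ring.
Qed.

Lemma cocycle_defectDl u1 u2 v :
  cocycle_defect (u1 + u2) v = cocycle_defect u1 v + cocycle_defect u2 v.
Proof.
rewrite /cocycle_defect B_Dl (linD D_lin) (linD F_lin) adTDl (linD D_lin) adTDr.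
by apply/matrixP => i j; rewrite !mxE; ring.
Qed.
Lemma cocycle_defect_skew u v : cocycle_defect v u = - cocycle_defect u v.
Proof.
rewrite /cocycle_defect (B_skew v u) (linN D_lin).
by apply/matrixP => i j; rewrite !mxE; ring.
Qed.

End SkewBracket.

Section DirectSum.
Variables (K : fieldType) (n1 n2 : nat).
Implicit Types (U W : 'rV[K]_(n1 + n2)).

Lemma pair_row_mx (a y : 'rV[K]_n1) (x c : 'rV[K]_n2) :
  pair (row_mx a x) (row_mx y c) = pair a y + pair x c.
Proof.
rewrite /pair big_split_ord /=; congr (_ + _); apply: eq_bigr => i _.
  by rewrite !row_mxEl.
by rewrite !row_mxEr.
Qed.

Lemma pair_hsubmx U W :
  pair U W = pair (lsubmx U) (lsubmx W) + pair (rsubmx U) (rsubmx W).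
Proof. by rewrite -{1}[U]hsubmxK -{1}[W]hsubmxK pair_row_mx. Qed.

Lemma lsub_dualmap (f : 'rV[K]_(n1 + n2) -> 'rV[K]_(n1 + n2)) U v :
  islinear f -> pair (lsubmx (dualmap f U)) v = pair U (f (row_mx v 0)).
Proof.
move=> f_lin.
have -> : lsubmx (dualmap f U) = \row_i pair U (f (row_mx (bvec K i) 0)).
  by apply/rowP => i; rewrite !mxE /bvec delta_mx_lshift.
apply: (pair_row_form (F := fun v => pair U (f (row_mx v 0)))) => s v1 v2.
have -> : row_mx (s *: v1 + v2) (0 : 'rV[K]_n2) = s *: row_mx v1 0 + row_mx v2 0.
  by rewrite scale_row_mx add_row_mx scaler0 addr0.
by rewrite f_lin pairDZr.
Qed.

Lemma rsub_dualmap (f : 'rV[K]_(n1 + n2) -> 'rV[K]_(n1 + n2)) U v :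
  islinear f -> pair (rsubmx (dualmap f U)) v = pair U (f (row_mx 0 v)).
Proof.
move=> f_lin.
have -> : rsubmx (dualmap f U) = \row_i pair U (f (row_mx 0 (bvec K i))).
  by apply/rowP => i; rewrite !mxE /bvec delta_mx_rshift.
apply: (pair_row_form (F := fun v => pair U (f (row_mx 0 v)))) => s v1 v2.
have -> : row_mx (0 : 'rV[K]_n1) (s *: v1 + v2) = s *: row_mx 0 v1 + row_mx 0 v2.
  by rewrite scale_row_mx add_row_mx scaler0 addr0.
by rewrite f_lin pairDZr.
Qed.

End DirectSum.

Lemma tpair_double_r (K : fieldType) (n : nat) (A B : 'rV[K]_(n + n)) :
  tpair (double_r K n) (tens A B) = pair (lsubmx A) (rsubmx B).
Proof.
rewrite /double_r tpair_suml; apply: eq_bigr => i _.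
rewrite tpair_tens_tens (pair_hsubmx _ A) (pair_hsubmx _ B).
by rewrite !row_mxKl !row_mxKr !pair0l addr0 add0r !pair_bvecl.
Qed.


Section HomLieBialgebra.
Variables (K : fieldType) (n : nat) (br : 'rV[K]_n -> 'rV[K]_n -> 'rV[K]_n)
  (phi : 'rV[K]_n -> 'rV[K]_n) (Delta : 'rV[K]_n -> 'M[K]_(n, n)).
Hypothesis bialg : HomLieBialg br phi Delta.
Implicit Types (a b d e x y z w : 'rV[K]_n).

Local Notation phiS := (dualmap phi).
Local Notation brS := (dual_br Delta).
Local Notation adgT z a := (dualmap (br z) a).
Local Notation adsT a x := (dualmap (brS a) x).

Fact g_homLie : HomLie br phi. Proof. by case: bialg => [[]]. Qed.
Fact g_winv : weakly_involutive br phi. Proof. by case: bialg => [[]]. Qed.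
Fact Delta_lin : islinearT Delta. Proof. by case: bialg. Qed.
Fact gs_homLie : HomLie brS phiS. Proof. by case: bialg. Qed.
Fact gs_winv : weakly_involutive brS phiS. Proof. by case: bialg. Qed.
Fact Delta_cocycle x y :
  Delta (br x y) = adT br phi (phi x) (Delta y) - adT br phi (phi y) (Delta x).
Proof. by case: bialg => _ _ _ _; apply. Qed.

Fact br_linr z : islinear (br z). Proof. by case: g_homLie. Qed.
Fact br_skew x y : br x y = - br y x. Proof. by case: g_homLie. Qed.
Fact phi_lin : islinear phi. Proof. by case: g_homLie. Qed.
Fact phi_br x y : phi (br x y) = br (phi x) (phi y). Proof. by case: g_homLie. Qed.
Fact br_jacobi x y z :
  br (phi x) (br y z) + br (phi y) (br z x) + br (phi z) (br x y) = 0.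
Proof. by case: g_homLie. Qed.
Fact br_winv x y : br (phi (phi x)) y = br x y. Proof. exact: g_winv. Qed.
Fact brS_skew a b : brS a b = - brS b a. Proof. by case: gs_homLie. Qed.
Fact phiS_brS a b : phiS (brS a b) = brS (phiS a) (phiS b).
Proof. by case: gs_homLie. Qed.
Fact brS_jacobi a b c :
  brS (phiS a) (brS b c) + brS (phiS b) (brS c a) + brS (phiS c) (brS a b) = 0.
Proof. by case: gs_homLie. Qed.
Fact brS_winv a b : brS (phiS (phiS a)) b = brS a b. Proof. exact: gs_winv. Qed.

Lemma br_linl z : islinear (br^~ z).
Proof.
move=> c x y /=; rewrite br_skew br_linr (br_skew z x) (br_skew z y).
by rewrite scalerN opprD !opprK.
Qed.

Lemma br0r z : br z 0 = 0. Proof. exact: (lin0 (br_linr z)). Qed.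
Lemma brNr z x : br z (- x) = - br z x. Proof. exact: (linN (br_linr z)). Qed.
Lemma brBr z x y : br z (x - y) = br z x - br z y. Proof. exact: (linB (br_linr z)). Qed.
Lemma br0l z : br 0 z = 0. Proof. exact: (lin0 (br_linl z)). Qed.
Lemma brNl z x : br (- x) z = - br x z. Proof. exact: (linN (br_linl z)). Qed.
Lemma brBl z x y : br (x - y) z = br x z - br y z. Proof. exact: (linB (br_linl z)). Qed.

Lemma phi0 : phi 0 = 0. Proof. exact: (lin0 phi_lin). Qed.
Lemma phiD x y : phi (x + y) = phi x + phi y. Proof. exact: (linD phi_lin). Qed.
Lemma phiN x : phi (- x) = - phi x. Proof. exact: (linN phi_lin). Qed.
Lemma phiB x y : phi (x - y) = phi x - phi y. Proof. exact: (linB phi_lin). Qed.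

Lemma phiS0 : phiS 0 = 0. Proof. exact: (lin0 (dualmap_lin phi)). Qed.
Lemma phiSD a b : phiS (a + b) = phiS a + phiS b.
Proof. exact: (linD (dualmap_lin phi)). Qed.
Lemma phiSN a : phiS (- a) = - phiS a. Proof. exact: (linN (dualmap_lin phi)). Qed.

Lemma brS_linl b : islinear (brS^~ b).
Proof. by move=> c x y; rewrite dual_brDZl. Qed.
Lemma brS_linr a : islinear (brS a).
Proof. by move=> c x y; rewrite dual_brDZr. Qed.
Lemma brS0l b : brS 0 b = 0. Proof. exact: (lin0 (brS_linl b)). Qed.
Lemma brSNl b a : brS (- a) b = - brS a b. Proof. exact: (linN (brS_linl b)). Qed.
Lemma brSBl b a a' : brS (a - a') b = brS a b - brS a' b.
Proof. exact: (linB (brS_linl b)). Qed.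
Lemma brS0r a : brS a 0 = 0. Proof. exact: (lin0 (brS_linr a)). Qed.
Lemma brSNr a b : brS a (- b) = - brS a b. Proof. exact: (linN (brS_linr a)). Qed.
Lemma brSBr a b b' : brS a (b - b') = brS a b - brS a b'.
Proof. exact: (linB (brS_linr a)). Qed.

Lemma adsT_pair a x b : pair b (adsT a x) = pair (brS a b) x.
Proof. by rewrite pairC (dualmap_pair _ _ (brS_linr a)) pairC. Qed.
Lemma adgT_pair z a y : pair (adgT z a) y = pair a (br z y).
Proof. exact: dualmap_pair (br_linr z). Qed.
Lemma phiS_pair a x : pair (phiS a) x = pair a (phi x).
Proof. exact: dualmap_pair phi_lin. Qed.
Lemma brS_pair a b x : pair (brS a b) x = tpair (Delta x) (tens a b).
Proof. exact: dual_br_pair Delta_lin. Qed.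

Lemma adsTDZl c a a' x : adsT (c *: a + a') x = c *: adsT a x + adsT a' x.
Proof. by apply/rowP => k; rewrite !mxE dual_brDZl pairDZr. Qed.
Lemma adsTDZr c a x x' : adsT a (c *: x + x') = c *: adsT a x + adsT a x'.
Proof. exact: dualmap_lin. Qed.
Lemma adgTDZl c z z' a : adgT (c *: z + z') a = c *: adgT z a + adgT z' a.
Proof. by apply/rowP => k; rewrite !mxE (br_linl (bvec K k)) pairDZr. Qed.
Lemma adgTDZr z c a a' : adgT z (c *: a + a') = c *: adgT z a + adgT z a'.
Proof. exact: dualmap_lin. Qed.

Lemma adsT0r a : adsT a 0 = 0.
Proof. exact: (lin0 (dualmap_lin (brS a))). Qed.
Lemma adsT0l x : adsT 0 x = 0.
Proof. by apply/rowP => k; rewrite !mxE brS0l pair0r. Qed.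
Lemma adgT0r z : adgT z 0 = 0.
Proof. exact: (lin0 (dualmap_lin (br z))). Qed.
Lemma adgT0l a : adgT 0 a = 0.
Proof. by apply/rowP => k; rewrite !mxE br0l pair0r. Qed.

Lemma pair_br_phi a x y : pair a (br (phi x) (phi y)) = pair (phiS a) (br x y).
Proof. by rewrite -phi_br phiS_pair. Qed.
Lemma pair_brS_phi a b x : pair (brS a b) (phi x) = pair (brS (phiS a) (phiS b)) x.
Proof. by rewrite -phiS_pair phiS_brS. Qed.
Lemma pair_brS_skew a b x : pair (brS a b) x = - pair (brS b a) x.
Proof. by rewrite brS_skew pairNl. Qed.
Lemma pair_brS_br a b x y : pair (brS a b) (br x y) =
    pair (brS (adgT (phi x) a) (phiS b)) y + pair (brS (phiS a) (adgT (phi x) b)) y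
  - pair (brS (adgT (phi y) a) (phiS b)) x - pair (brS (phiS a) (adgT (phi y) b)) x.
Proof.
by rewrite !brS_pair Delta_cocycle tpairBl /adT !tpairDl !tmap_pair opprD addrA.
Qed.

Ltac pair_expand :=
  rewrite ?(pair0r, pair0l, pairDr, pairDl, pairBr, pairBl, pairNr, pairNl).

(* The compatibility condition of (g^*, -Delta_* ) paired with z (x) w. *)
Lemma pair_dual_cocycle a b z w :
  - pair (brS a b) (br z w)
  - (- pair b (br (adsT (phiS a) z) (phi w)) - pair b (br (phi z) (adsT (phiS a) w))
     - (- pair a (br (adsT (phiS b) z) (phi w)) - pair a (br (phi z) (adsT (phiS b) w))))
  = 0.
Proof.
rewrite (pair_brS_br a b) (br_skew (adsT (phiS a) _)) (br_skew (adsT (phiS b) _)).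
pair_expand; rewrite -!adgT_pair !adsT_pair.
rewrite (pair_brS_skew (adgT (phi z) a)) (pair_brS_skew (adgT (phi w) a)).
ring.
Qed.

Local Notation Delta_s := (fun a => - dual_cobr br a).

Lemma dual_cobr_pair c x y : tpair (dual_cobr br c) (tens x y) = pair c (br x y).
Proof.
have form_l : linear_form (fun x => pair c (br x y)).
  by move=> s u v; rewrite (br_linl y) pairDZr.
rewrite (linear_form_expand form_l) tpair_tens; apply: eq_bigr => i _.
have form_r : linear_form (fun y => pair c (br (bvec K i) y)).
  by move=> s u v; rewrite br_linr pairDZr.
rewrite (linear_form_expand form_r) mulr_sumr; apply: eq_bigr => j _.
by rewrite mxE; ring.
Qed.

Lemma dual_br_dual_cobr x y : dual_br Delta_s x y = - br x y.
Proof. by apply/rowP => k; rewrite !mxE tpairNl dual_cobr_pair pair_bvecl. Qed.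

Lemma dualmap_phiS x : dualmap phiS x = phi x.
Proof. exact: (dualmapK x phi_lin). Qed.

Lemma dual_bialg : HomLieBialg brS phiS Delta_s.
Proof.
split.
- by split; [exact: gs_homLie | exact: gs_winv].
- by move=> s a b; apply/matrixP => i j; rewrite /dual_cobr !mxE pairDZl; ring.
- split.
  + by move=> z s x y; rewrite !dual_br_dual_cobr br_linr scalerN opprD.
  + by move=> x y; rewrite !dual_br_dual_cobr br_skew.
  + exact: dualmap_lin.
  + by move=> x y; rewrite !dual_br_dual_cobr !dualmap_phiS phiN phi_br.
  + move=> x y z; rewrite !dual_br_dual_cobr !dualmap_phiS !brNr !opprK.
    exact: br_jacobi.
- by move=> x y; rewrite !dual_br_dual_cobr !dualmap_phiS br_winv.
move=> a b; apply: eq_tens_pair => x y.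
rewrite tpairNl dual_cobr_pair tpairBl !adT_pair !dualmap_phiS.
rewrite !tpairNl !dual_cobr_pair.
by apply/eqP; rewrite -subr_eq0; apply/eqP; exact: pair_dual_cocycle.
Qed.

Local Notation dbr := (double_br br phi Delta).
Local Notation dphi := (double_phi phi).
Local Notation dcobr := (double_cobr br phi Delta).
Local Notation emb_g x := (row_mx x (0 : 'rV[K]_n)).
Local Notation emb_s a := (row_mx (0 : 'rV[K]_n) a).

Ltac simp0 :=
  rewrite ?(phiS0, adsT0l, adsT0r, adgT0r, adgT0l, brS0l, brS0r, br0l, br0r,
    phi0, pair0l, pair0r, subr0, addr0, oppr0, add0r, sub0r, row_mx0).

Lemma coad_gE x a : coad_g br phi x a = - adgT (phi x) a.
Proof. by apply/rowP => k; rewrite !mxE. Qed.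
Lemma coad_gsE a x : coad_gs phi Delta a x = - adsT (phiS a) x.
Proof. by apply/rowP => k; rewrite !mxE. Qed.

Lemma dbrE x a y b : dbr (row_mx x a) (row_mx y b) =
  row_mx (br x y - adsT (phiS a) y + adsT (phiS b) x)
         (- adgT (phi x) b + adgT (phi y) a + brS a b).
Proof.
by rewrite /double_br /= !row_mxKl !row_mxKr !coad_gE !coad_gsE !opprK.
Qed.
Lemma dphiE x a : dphi (row_mx x a) = row_mx (phi x) (phiS a).
Proof. by rewrite /double_phi row_mxKl row_mxKr. Qed.

Lemma hsubmx_emb (u : 'rV[K]_(n + n)) : u = emb_g (lsubmx u) + emb_s (rsubmx u).
Proof. by rewrite add_row_mx addr0 add0r hsubmxK. Qed.

Lemma dbr_lin u : islinear (dbr u).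
Proof.
move=> c v w; rewrite -[u]hsubmxK -[v]hsubmxK -[w]hsubmxK scale_row_mx add_row_mx.
rewrite !dbrE scale_row_mx add_row_mx; congr row_mx.
  rewrite br_linr adsTDZr (dualmap_lin phi) adsTDZl.
  by apply/rowP => k; rewrite !mxE; ring.
rewrite phi_lin adgTDZl adgTDZr dual_brDZr.
by apply/rowP => k; rewrite !mxE; ring.
Qed.
Lemma dphi_lin : islinear dphi.
Proof.
move=> c v w; rewrite -[v]hsubmxK -[w]hsubmxK scale_row_mx add_row_mx !dphiE.
by rewrite scale_row_mx add_row_mx phi_lin (dualmap_lin phi).
Qed.

Lemma dbr_skew u v : dbr u v = - dbr v u.
Proof.
rewrite -[u]hsubmxK -[v]hsubmxK !dbrE opp_row_mx.
rewrite (br_skew (lsubmx u) (lsubmx v)) (brS_skew (rsubmx u) (rsubmx v)).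
by congr row_mx; apply/rowP => k; rewrite !mxE; ring.
Qed.

Lemma phi_adsT a y : phi (adsT (phiS a) y) = adsT (phiS (phiS a)) (phi y).
Proof.
by apply: eq_row_pairr => b; rewrite -phiS_pair !adsT_pair pair_brS_phi brS_winv.
Qed.
Lemma phiS_adgT z a : phiS (adgT (phi z) a) = adgT (phi (phi z)) (phiS a).
Proof.
by apply: eq_row_pair => x; rewrite phiS_pair !adgT_pair pair_br_phi br_winv.
Qed.

Lemma dphi_dbr u v : dphi (dbr u v) = dbr (dphi u) (dphi v).
Proof.
rewrite -[u]hsubmxK -[v]hsubmxK !dbrE !dphiE ?dbrE ?row_mxKl ?row_mxKr; congr row_mx.
  by rewrite phiD phiB phi_br !phi_adsT.
by rewrite !phiSD phiSN !phiS_adgT phiS_brS.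
Qed.

Lemma adsT_winvl a y : adsT (phiS (phiS (phiS a))) y = adsT (phiS a) y.
Proof. by apply: eq_row_pairr => b; rewrite !adsT_pair brS_winv. Qed.
Lemma adsT_winvr b x : adsT (phiS b) (phi (phi x)) = adsT (phiS b) x.
Proof.
apply: eq_row_pairr => c; rewrite !adsT_pair !pair_brS_phi brS_winv.
by rewrite pair_brS_skew brS_winv -pair_brS_skew.
Qed.
Lemma adgT_winvl x b : adgT (phi (phi (phi x))) b = adgT (phi x) b.
Proof. by apply/rowP => k; rewrite !mxE br_winv. Qed.
Lemma adgT_winvr y a : adgT (phi y) (phiS (phiS a)) = adgT (phi y) a.
Proof.
apply: eq_row_pair => z; rewrite !adgT_pair !phiS_pair !phi_br br_winv.
by rewrite br_skew br_winv pairNr -pairNr -br_skew.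
Qed.

Lemma dbr_winv u v : dbr (dphi (dphi u)) v = dbr u v.
Proof.
rewrite -[u]hsubmxK -[v]hsubmxK !dphiE !dbrE.
by rewrite br_winv adsT_winvl adsT_winvr adgT_winvl adgT_winvr brS_winv.
Qed.

Local Notation jac := (jacobiator dbr dphi).

Ltac expand_jac :=
  rewrite /jacobiator !dphiE; simp0; rewrite !dbrE; simp0; rewrite ?dbrE; simp0.

Lemma jac_ggg x y z : jac (emb_g x) (emb_g y) (emb_g z) = 0.
Proof. by expand_jac; rewrite !add_row_mx br_jacobi; simp0. Qed.

Lemma jac_sss a b c : jac (emb_s a) (emb_s b) (emb_s c) = 0.
Proof. by expand_jac; rewrite !add_row_mx brS_jacobi; simp0. Qed.

Lemma jac_ggs x y c : jac (emb_g x) (emb_g y) (emb_s c) = 0.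
Proof.
expand_jac; rewrite !add_row_mx -row_mx0; congr row_mx.
  apply: eq_row_pairr => d; rewrite ?brNr; pair_expand; rewrite -!adgT_pair.
  rewrite !adsT_pair !pair_brS_phi !brS_winv brSNl pairNl (pair_brS_br c d x y).
  ring.
apply: eq_row_pair => z; pair_expand; rewrite !adgT_pair; pair_expand.
rewrite ?adgT_pair !br_winv phiS_pair phi_br !br_winv.
rewrite (br_skew (br x y) (phi z)) (br_skew x z) brNr; pair_expand.
have := congr1 (pair c) (br_jacobi x y z); rewrite pair0r; pair_expand => jac_c.
by apply: (eq0_by_opp jac_c); ring.
Qed.

Lemma jac_gss x b c : jac (emb_g x) (emb_s b) (emb_s c) = 0.
Proof.
expand_jac; rewrite !add_row_mx -row_mx0; congr row_mx.
  apply: eq_row_pairr => d; pair_expand.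
  rewrite !adsT_pair !pair_brS_phi !brS_winv; pair_expand; rewrite !adsT_pair.
  rewrite (brS_skew (brS b c) (phiS d)) (brS_skew b d) brSNr; pair_expand.
  have := congr1 (fun v => pair v x) (brS_jacobi b c d); rewrite /= pair0l; pair_expand.
  by move=> jac_x; apply: (eq0_by_opp jac_x); ring.
apply: eq_row_pair => y; pair_expand; rewrite !adgT_pair phiN brNl; pair_expand.
rewrite !phiS_pair !phi_br !br_winv (pair_brS_br b c x y).
rewrite (br_skew (adsT (phiS c) x) (phi y)) (br_skew (adsT (phiS b) x) (phi y)).
pair_expand; rewrite -!adgT_pair !adsT_pair brSNr pairNl.
by rewrite (pair_brS_skew (adgT (phi y) b)) (pair_brS_skew (adgT (phi x) b)); ring.
Qed.

Lemma dbr_jacobi (u v w : 'rV[K]_(n + n)) : jac u v w = 0.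
Proof.
have jacDl := jacobiatorDl dbr_lin dbr_skew dphi_lin.
have jacDm := jacobiatorDm dbr_lin dbr_skew dphi_lin.
have jacDr := jacobiatorDr dbr_lin dbr_skew dphi_lin.
rewrite (hsubmx_emb u) (hsubmx_emb v) (hsubmx_emb w) !jacDl !jacDm !jacDr.
rewrite ![jac (emb_s _) (emb_s _) (emb_g _)]jacobiator_rot.
rewrite ![jac (emb_g _) (emb_s _) (emb_g _)]jacobiator_rot.
rewrite ![jac (emb_s _) (emb_g _) (emb_g _)]jacobiator_rot.
rewrite ![jac (emb_s _) (emb_g _) (emb_s _)]jacobiator_rot.
rewrite !jac_ggg !jac_sss !jac_ggs !jac_gss.
by rewrite !addr0.
Qed.

Lemma lsub_dphi U : lsubmx (dualmap dphi U) = phiS (lsubmx U).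
Proof.
apply/rowP => i; rewrite !mxE /bvec delta_mx_lshift dphiE pair_hsubmx.
by rewrite row_mxKl row_mxKr phiS0 pair0r addr0.
Qed.
Lemma rsub_dphi U : rsubmx (dualmap dphi U) = phi (rsubmx U).
Proof.
apply/rowP => i; rewrite !mxE /bvec delta_mx_rshift dphiE pair_hsubmx.
rewrite row_mxKl row_mxKr phi0 pair0r add0r.
by rewrite pairC phiS_pair -/(bvec K i) pair_bvecl.
Qed.

Lemma dcobr_pair_row z c a x b y :
  tpair (dcobr (row_mx z c)) (tens (row_mx a x) (row_mx b y)) =
  pair (brS a b) z - pair c (br x y).
Proof.
rewrite /double_cobr /adT tpairDl !tmap_pair !tpair_double_r lsub_dphi rsub_dphi.
rewrite row_mxKl row_mxKr (lsub_dualmap _ _ (dbr_lin _)) [pair (phiS a) _]pairC.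
rewrite (rsub_dualmap _ _ (dbr_lin _)) !dbrE !pair_row_mx; simp0.
rewrite !(pairDr, pairBr, pairNr) !adsT_pair pair_brS_phi !brS_winv.
rewrite [pair x _]pairC [pair y (adgT _ _)]pairC !adgT_pair br_winv.
rewrite [pair y (brS _ _)]pairC phiS_pair phi_br br_winv (br_skew y x) pairNr.
ring.
Qed.

Lemma dcobr_pair (u U V : 'rV[K]_(n + n)) : tpair (dcobr u) (tens U V) =
  pair (brS (lsubmx U) (lsubmx V)) (lsubmx u)
  - pair (rsubmx u) (br (rsubmx U) (rsubmx V)).
Proof. by rewrite -{1}[u]hsubmxK -{1}[U]hsubmxK -{1}[V]hsubmxK dcobr_pair_row. Qed.

Lemma dcobr_lin : islinearT dcobr.
Proof.
move=> s u v; apply: eq_tens_pair => U V; rewrite tpairDZl !dcobr_pair.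
rewrite -[u]hsubmxK -[v]hsubmxK scale_row_mx add_row_mx !row_mxKl !row_mxKr.
by rewrite pairDZr pairDZl; ring.
Qed.

Lemma dual_dbrE U V : dual_br dcobr U V =
  row_mx (brS (lsubmx U) (lsubmx V)) (- br (rsubmx U) (rsubmx V)).
Proof.
apply: eq_row_pair => W; rewrite (dual_br_pair _ _ _ dcobr_lin) dcobr_pair.
by rewrite pair_hsubmx row_mxKl row_mxKr pairNl [pair (rsubmx W) _]pairC.
Qed.
Lemma dual_dphiE U : dualmap dphi U = row_mx (phiS (lsubmx U)) (phi (rsubmx U)).
Proof. by rewrite -lsub_dphi -rsub_dphi hsubmxK. Qed.

Lemma dual_double_homLie : HomLie (dual_br dcobr) (dualmap dphi).
Proof.
split.
- move=> Z s U V; rewrite !dual_dbrE -[U]hsubmxK -[V]hsubmxK -[Z]hsubmxK.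
  rewrite scale_row_mx add_row_mx !row_mxKl !row_mxKr scale_row_mx add_row_mx.
  rewrite dual_brDZr br_linr; congr row_mx.
  by apply/rowP => k; rewrite !mxE; ring.
- by move=> U V; rewrite !dual_dbrE opp_row_mx brS_skew (br_skew (rsubmx U)).
- exact: dualmap_lin.
- move=> U V; rewrite !dual_dphiE !dual_dbrE !row_mxKl !row_mxKr.
  by rewrite phiS_brS phiN phi_br.
- move=> U V W; rewrite !dual_dphiE !dual_dbrE !row_mxKl !row_mxKr !add_row_mx.
  by rewrite !brNr !opprK brS_jacobi br_jacobi row_mx0.
Qed.

Lemma dual_double_winv : weakly_involutive (dual_br dcobr) (dualmap dphi).
Proof.
move=> U V; rewrite !dual_dphiE !dual_dbrE !row_mxKl !row_mxKr.
by rewrite brS_winv br_winv.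
Qed.

Lemma lsub_adT_emb_g U x :
  lsubmx (dualmap (dbr (emb_g (phi x))) U) = adgT (phi x) (lsubmx U).
Proof.
apply: eq_row_pair => v; rewrite (lsub_dualmap _ _ (dbr_lin _)) dbrE; simp0.
by rewrite pair_hsubmx row_mxKl row_mxKr; simp0; rewrite adgT_pair.
Qed.
Lemma rsub_adT_emb_g U x : rsubmx (dualmap (dbr (emb_g (phi x))) U) =
  - adsT (phiS (lsubmx U)) x - br x (rsubmx U).
Proof.
apply: eq_row_pair => b; rewrite (rsub_dualmap _ _ (dbr_lin _)) dbrE; simp0.
rewrite pair_hsubmx row_mxKl row_mxKr; pair_expand.
rewrite [pair (adsT _ _) b]pairC [pair (br _ _) b]pairC [pair (rsubmx U) _]pairC.
by rewrite !adsT_pair adgT_pair pair_brS_phi !brS_winv br_winv pair_brS_skew.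
Qed.
Lemma lsub_adT_emb_s U a : lsubmx (dualmap (dbr (emb_s (phiS a))) U) =
  - brS a (lsubmx U) - adgT (phi (rsubmx U)) a.
Proof.
apply: eq_row_pair => v; rewrite (lsub_dualmap _ _ (dbr_lin _)) dbrE; simp0.
rewrite pair_hsubmx row_mxKl row_mxKr; pair_expand.
rewrite [pair (rsubmx U) _]pairC !adsT_pair !adgT_pair brS_winv phiS_pair.
by rewrite phi_br br_winv (br_skew v) pairNr.
Qed.
Lemma rsub_adT_emb_s U a :
  rsubmx (dualmap (dbr (emb_s (phiS a))) U) = adsT (phiS a) (rsubmx U).
Proof.
apply: eq_row_pair => b; rewrite (rsub_dualmap _ _ (dbr_lin _)) dbrE; simp0.
rewrite pair_hsubmx row_mxKl row_mxKr; pair_expand.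
by rewrite [pair (rsubmx U) _]pairC [pair (adsT _ _) b]pairC adsT_pair add0r.
Qed.

Lemma adT_dcobr_pair (z v U V : 'rV[K]_(n + n)) :
  tpair (adT dbr dphi z (dcobr v)) (tens U V) =
    (pair (brS (lsubmx (dualmap (dbr z) U)) (phiS (lsubmx V))) (lsubmx v)
     - pair (rsubmx v) (br (rsubmx (dualmap (dbr z) U)) (phi (rsubmx V))))
  + (pair (brS (phiS (lsubmx U)) (lsubmx (dualmap (dbr z) V))) (lsubmx v)
     - pair (rsubmx v) (br (phi (rsubmx U)) (rsubmx (dualmap (dbr z) V)))).
Proof.
rewrite adT_pair [X in X + _ = _]dcobr_pair [X in _ + X = _]dcobr_pair.
by rewrite !lsub_dphi !rsub_dphi.
Qed.

Local Notation defect := (cocycle_defect dbr dphi dcobr).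

Lemma defect_gg x y : defect (emb_g x) (emb_g y) = 0.
Proof.
apply: eq_tens_pair => U V; rewrite tpair0l /cocycle_defect !tpairBl.
rewrite [X in X - _ = _]dcobr_pair [X in _ - (X - _) = _]adT_dcobr_pair.
rewrite [X in _ - (_ - X) = _]adT_dcobr_pair !dphiE ?phiS0 ?phi0.
rewrite !lsub_adT_emb_g !rsub_adT_emb_g dbrE !row_mxKl !row_mxKr.
by simp0; rewrite pair_brS_br; ring.
Qed.

Lemma defect_ss a b : defect (emb_s a) (emb_s b) = 0.
Proof.
apply: eq_tens_pair => U V; rewrite tpair0l /cocycle_defect !tpairBl.
rewrite [X in X - _ = _]dcobr_pair [X in _ - (X - _) = _]adT_dcobr_pair.
rewrite [X in _ - (_ - X) = _]adT_dcobr_pair !dphiE ?phiS0 ?phi0.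
rewrite !lsub_adT_emb_s !rsub_adT_emb_s dbrE !row_mxKl !row_mxKr.
by simp0; exact: pair_dual_cocycle.
Qed.

Lemma defect_gs x b : defect (emb_g x) (emb_s b) = 0.
Proof.
apply: eq_tens_pair => U V; rewrite tpair0l /cocycle_defect !tpairBl.
rewrite [X in X - _ = _]dcobr_pair [X in _ - (X - _) = _]adT_dcobr_pair.
rewrite [X in _ - (_ - X) = _]adT_dcobr_pair !dphiE ?phiS0 ?phi0.
rewrite (lsub_adT_emb_g U x) (lsub_adT_emb_g V x) (rsub_adT_emb_g U x).
rewrite (rsub_adT_emb_g V x) (lsub_adT_emb_s U b) (lsub_adT_emb_s V b).
rewrite (rsub_adT_emb_s U b) (rsub_adT_emb_s V b) dbrE !row_mxKl !row_mxKr; simp0.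
move: (lsubmx U) (lsubmx V) (rsubmx U) (rsubmx V) => d e z w.
rewrite ?(brBl, brNl, brBr, brNr, brSBl, brSNl, brSBr, brSNr); pair_expand.
rewrite adsT_pair adgT_pair (br_skew (adsT (phiS d) x)) (br_skew (br x z)).
rewrite (br_skew x w) brNr; pair_expand.
rewrite -(adgT_pair (phi w) b (adsT (phiS d) x)).
rewrite -(adgT_pair (phi z) b (adsT (phiS e) x)) !adsT_pair.
rewrite (brS_skew (brS b d) (phiS e)) (brS_skew b e) brSNr (pair_brS_skew (phiS e)).
pair_expand.
have := congr1 (pair b) (br_jacobi x z w); rewrite pair0r; pair_expand => jac_b.
have := congr1 (fun v => pair v x) (brS_jacobi b d e); rewrite /= pair0l.
by pair_expand => jac_x; apply: (eq0_by_add jac_b jac_x); ring.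
Qed.

Lemma dcobr_cocycle (u v : 'rV[K]_(n + n)) : defect u v = 0.
Proof.
have defectDl := cocycle_defectDl dbr_lin dbr_skew dphi_lin dcobr_lin.
have defect_skew := cocycle_defect_skew dphi dbr_skew dcobr_lin.
rewrite (hsubmx_emb u) (hsubmx_emb v).
move: (lsubmx u) (rsubmx u) (lsubmx v) (rsubmx v) => x a y b.
rewrite defectDl !(defect_skew (emb_g y + emb_s b)) !defectDl.
rewrite defect_gg defect_ss (defect_skew (emb_g x) (emb_s b)) !defect_gs.
by rewrite !(oppr0, addr0).
Qed.

Lemma double_bialg : HomLieBialg dbr dphi dcobr.
Proof.
split.
- split; last exact: dbr_winv.
  split; [exact: dbr_lin | exact: dbr_skew | exact: dphi_lin | exact: dphi_dbr | ].
  exact: dbr_jacobi.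
- exact: dcobr_lin.
- exact: dual_double_homLie.
- exact: dual_double_winv.
- by move=> u v; apply/eqP; rewrite -subr_eq0; apply/eqP; exact: dcobr_cocycle.
Qed.

Lemma adjoint_incl_g U : adjoint (incl_g phi) U = phiS (lsubmx U).
Proof.
by apply/rowP => k; rewrite !mxE /incl_g pair_hsubmx row_mxKl row_mxKr pair0r addr0.
Qed.
Lemma adjoint_incl_gs U : adjoint (incl_gs phi) U = phi (rsubmx U).
Proof.
apply/rowP => k; rewrite !mxE /incl_gs pair_hsubmx row_mxKl row_mxKr pair0r add0r.
by rewrite pairC phiS_pair pair_bvecl.
Qed.

Lemma incl_g_hom : HomLieBialgHom br phi Delta dbr dphi dcobr (incl_g phi).
Proof.
split.
- by move=> s x y; rewrite /incl_g phi_lin scale_row_mx add_row_mx scaler0 addr0.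
- by move=> x y; rewrite /incl_g dbrE; simp0; rewrite phi_br.
- by move=> x; rewrite /incl_g dphiE phiS0.
move=> x; apply: eq_tens_pair => U V.
rewrite tmap_pair dcobr_pair !adjoint_incl_g /incl_g row_mxKl row_mxKr pair0l subr0.
by rewrite -brS_pair pair_brS_phi.
Qed.

Lemma incl_gs_hom : HomLieBialgHom brS phiS Delta_s dbr dphi dcobr (incl_gs phi).
Proof.
split.
- move=> s x y; rewrite /incl_gs (dualmap_lin phi) scale_row_mx add_row_mx.
  by rewrite scaler0 addr0.
- by move=> a b; rewrite /incl_gs dbrE; simp0; rewrite phiS_brS.
- by move=> a; rewrite /incl_gs dphiE phi0.
move=> a; apply: eq_tens_pair => U V.
rewrite tmap_pair dcobr_pair !adjoint_incl_gs /incl_gs row_mxKl row_mxKr pair0r.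
by rewrite tpairNl dual_cobr_pair sub0r pair_br_phi.
Qed.

End HomLieBialgebra.

Theorem mainTheorem3 (K : fieldType) (n : nat)
  (br : 'rV[K]_n -> 'rV[K]_n -> 'rV[K]_n) (phi : 'rV[K]_n -> 'rV[K]_n)
  (Delta : 'rV[K]_n -> 'M[K]_(n, n)) :
  HomLieBialg br phi Delta ->
  [/\ HomLieBialg (double_br br phi Delta) (double_phi phi)
        (double_cobr br phi Delta),
      HomLieBialgHom br phi Delta
        (double_br br phi Delta) (double_phi phi) (double_cobr br phi Delta)
        (incl_g phi),
      HomLieBialg (dual_br Delta) (dualmap phi) (fun a => - dual_cobr br a) &
      HomLieBialgHom (dual_br Delta) (dualmap phi) (fun a => - dual_cobr br a)
        (double_br br phi Delta) (double_phi phi) (double_cobr br phi Delta)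
        (incl_gs phi)].
Proof.
move=> bialg.
by split; [exact: double_bialg | exact: incl_g_hom | exact: dual_bialg | exact: incl_gs_hom].
Qed.
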